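(* Let $\mathbb{K}$ be a field of characteristic zero and let $\mathbb{K}(x)[S_x]$ be the ring of linear recurrence operators, in which $S_x\, a(x) = a(x+1)\, S_x$ for $a\in\mathbb{K}(x)$. Let $m$ be a positive integer and let $L\in\mathbb{K}(x)[S_x]$ be nonzero, with $m$-exponent separation $L=L_0+L_1+\cdots+L_{m-1}$, where $L_i=\sum_{j=0}^{r_i}\ell_{i,j}S_x^{jm+i}$ with $\ell_{i,j}\in\mathbb{K}(x)$. Let $\mathcal{L}_m$ be the $m\times m$ matrix over $\mathbb{K}(x)[S_x]$ whose entry in row $i$ and column $j$ ($0\le i,j\le m-1$) is $L_{(i-j)\bmod m}$. Then there exist a matrix $\mathcal{M}\in\mathbb{K}(x)[S_x]^{m\times m}$ and nonzero operators $T_0,\ldots,T_{m-1}\in\mathbb{K}(x)[S_x]$ such that $\mathcal{M}\cdot\mathcal{L}_m=\mathrm{diag}(T_0,T_1,\ldots,T_{m-1})$.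
   Context: Matrix products are computed in the noncommutative ring $\mathbb{K}(x)[S_x]$: the $(i,j)$ entry of $\mathcal{M}\cdot\mathcal{L}_m$ is $\sum_k \mathcal{M}_{i,k}(\mathcal{L}_m)_{k,j}$. *)

From HB Require Import structures.
From mathcomp Require Import all_boot all_order all_algebra.
Set Implicit Arguments. Unset Strict Implicit. Unset Printing Implicit Defensive.
Import Order.TTheory GRing.Theory Num.Theory.
Local Open Scope ring_scope.

Notation ratfun K := {fraction {poly K}}.

(* Shift automorphism sigma : a(x) |-> a(x+1) on K(x), computed on any
   representative n/d of the fraction (the result does not depend on it). *)
Definition shift_rf (K : fieldType) (f : ratfun K) : ratfun K :=
  let r := repr f in
  (tofrac (\n_r \Po ('X + 1))) / (tofrac (\d_r \Po ('X + 1))).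

(* Recurrence operators in K(x)[S_x]: an operator sum_k a_k S_x^k is stored
   as its coefficient list, i.e. as an element of {poly (ratfun K)}
   (coefficient of S_x^k at index k).  Addition, zero and equality are those
   of {poly _}; multiplication is the skew (Ore) product given by
   S_x a = sigma(a) S_x, i.e. (a S^i)(b S^j) = a sigma^i(b) S^(i+j). *)
Definition recop (K : fieldType) := {poly ratfun K}.

Definition opmul (K : fieldType) (P Q : recop K) : recop K :=
  \poly_(k < (size P + size Q).-1)
     \sum_(i < k.+1) P`_i * iter i (@shift_rf K) (Q`_(k - i)%N).

Definition exp_sep (K : fieldType) (m : nat) (L : recop K) (i : nat) : recop K :=
  \poly_(k < size L) (if (k %% m == i)%N then L`_k else 0).

Definition sep_matrix (K : fieldType) (m : nat) (L : recop K) : 'M[recop K]_m :=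
  \matrix_(i < m, j < m) exp_sep m L ((i + m - j) %% m)%N.

Definition opmxmul (K : fieldType) (m n p : nat)
    (A : 'M[recop K]_(m, n)) (B : 'M[recop K]_(n, p)) : 'M[recop K]_(m, p) :=
  \matrix_(i < m, j < p) \sum_(k < n) opmul (A i k) (B k j).

Definition opdiag (K : fieldType) (m : nat) (T : 'I_m -> recop K) : 'M[recop K]_m :=
  \matrix_(i < m, j < m) (if i == j then T i else 0).

(* For each row index i, linear algebra gives a nonzero Q_i whose product Q_i L
   has all its exponents in the single residue class m - 1 - i modulo m: asking
   the coefficients of Q_i L outside that class to vanish is a homogeneous
   linear system in the coefficients of Q_i with fewer equations than unknowns.
   Row i of M is the m-exponent separation of Q_i, listed in reversed order, so
   that the (i, j) entry of M * L_m collects exactly the part of Q_i L in the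
   residue class m - 1 - j: this is Q_i L when i = j and 0 otherwise.  Finally
   Q_i L <> 0 because the shift is injective, so leading coefficients multiply
   to a nonzero one. *)

From HB Require Import structures.
From mathcomp Require Import all_boot all_order all_algebra zify.
Set Implicit Arguments.
Unset Strict Implicit.
Unset Printing Implicit Defensive.
Import GRing.Theory.
Local Open Scope ring_scope.

Lemma fraction_eq0 (R : idomainType) (f : {fraction R}) :
  (f == 0) = (\n_(repr f) == 0).
Proof.
rewrite numer0 -[f in LHS]reprK.
have -> : (0 : {fraction R}) = (\pi_{fraction R} (ratio0 R))%qT.
  rewrite -tofrac0; unlock tofrac; congr (\pi _)%qT; apply: val_inj => /=.
  by rewrite /Ratio /insubd; case: insubP => //=; rewrite oner_eq0.
by rewrite eqmodE.
Qed.

Lemma eqn_modB_residue m c u t : (0 < m)%N -> (c < m)%N -> (u <= t)%N ->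
  ((t - u) %% m == (c + m - u %% m) %% m)%N = (t %% m == c)%N.
Proof.
move=> m_gt0 c_lt_m u_le_t.
have um_le : (u %% m <= c + m)%N by rewrite ltnW // ltn_addl // ltn_pmod.
by rewrite -(eqn_modDr u) subnK // -modnDmr subnK // modnDr (modn_small c_lt_m).
Qed.

Lemma card_nonresidue n m s c : (s < m)%N -> (c * m <= n)%N ->
  (#|[set k : 'I_n | (k %% m != s)%N]| <= n - c)%N.
Proof.
move=> s_lt_m cm_le_n.
have jms_lt (j : 'I_c) : (j * m + s < n)%N by have := ltn_ord j; nia.
pose f j := Ordinal (jms_lt j).
have f_inj : injective f.
  move=> j1 j2 /(congr1 val) /= /addIn /eqP.
  rewrite eqn_mul2r => /orP[/eqP m0|/eqP/val_inj //].
  by move: s_lt_m; rewrite m0.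
have f_res : f @: setT \subset ~: [set k : 'I_n | (k %% m != s)%N].
  by apply/subsetP => _ /imsetP[j _ ->]; rewrite !inE negbK /= modnMDl modn_small.
have := subset_leq_card f_res; rewrite card_imset // cardsT card_ord.
by have := cardsC [set k : 'I_n | (k %% m != s)%N]; rewrite card_ord; lia.
Qed.

Lemma left_kernel_neq0 (F : fieldType) p q (A : 'M[F]_(p, q)) :
  (q < p)%N -> exists2 v : 'rV_p, v != 0 & v *m A = 0.
Proof.
move=> q_lt_p; have : kermx A != 0.
  by rewrite kermx_eq0 -row_leq_rank -ltnNge (leq_ltn_trans (rank_leq_col A)).
by case/rowV0Pn => v /sub_kermxP vA0 v_neq0; exists v.
Qed.

Section RecurrenceOperators.
Variable K : fieldType.
Local Notation sh := (@shift_rf K).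
Implicit Types P Q : recop K.

Lemma shift_rf_eq0 f : (sh f == 0) = (f == 0).
Proof.
have size_X1 : size ('X + 1 : {poly K}) = 2%N by rewrite size_XaddC.
rewrite [RHS]fraction_eq0 /shift_rf /= mulf_eq0 invr_eq0 !tofrac_eq0.
rewrite -!size_poly_eq0 !size_comp_poly2 // !size_poly_eq0.
by rewrite (negbTE (denom_ratioP _)) orbF.
Qed.

Lemma iter_shift_rf_eq0 i f : (iter i sh f == 0) = (f == 0).
Proof. by elim: i => [|i IH]; rewrite ?iterS ?shift_rf_eq0. Qed.

Lemma iter_shift_rf0 i : iter i sh 0 = 0.
Proof. by apply/eqP; rewrite iter_shift_rf_eq0. Qed.

Lemma coef_opmul P Q k :
  (opmul P Q)`_k = \sum_(i < k.+1) P`_i * iter i sh Q`_(k - i).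
Proof.
rewrite coef_poly; case: ltnP => // size_le_k; symmetry; apply: big1 => i _.
case: (ltnP i (size P)) => [i_lt|i_ge]; last by rewrite nth_default ?mul0r.
have Q_le : (size Q <= k - i)%N by have := ltn_ord i; lia.
by rewrite (nth_default 0 Q_le) iter_shift_rf0 mulr0.
Qed.

Lemma coef_opmul_widen P Q a k : (size P <= a)%N ->
  (opmul P Q)`_k =
    \sum_(i < a) P`_i * (if (i <= k)%N then iter i sh Q`_(k - i) else 0).
Proof.
move=> size_P; rewrite coef_opmul.
pose f i := P`_i * (if (i <= k)%N then iter i sh Q`_(k - i) else 0).
have -> : \sum_(i < k.+1) P`_i * iter i sh Q`_(k - i) = \sum_(i < k.+1) f i.
  by apply: eq_bigr => i _; rewrite /f -ltnS ltn_ord.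
have widen p q : (forall i, (p <= i)%N -> f i = 0) ->
    \sum_(i < p) f i = \sum_(i < p + q) f i.
  move=> f0; rewrite -!(big_mkord xpredT f).
  rewrite (big_cat_nat (leq0n p) (leq_addr q p)) //= [X in _ + X]big1_seq ?addr0 //.
  by move=> i /andP[_]; rewrite mem_index_iota => /andP[/f0].
rewrite (widen _ a) => [|i]; last by rewrite /f ltnNge => /negbTE->; rewrite mulr0.
rewrite addnC -widen // => i a_le_i.
by rewrite /f nth_default ?mul0r // (leq_trans size_P).
Qed.

Lemma coef_opmul_lead P Q :
  (opmul P Q)`_((size P).-1 + (size Q).-1) =
    lead_coef P * iter (size P).-1 sh (lead_coef Q).
Proof.
have lt_k : ((size P).-1 < ((size P).-1 + (size Q).-1).+1)%N by lia.
rewrite coef_opmul (bigD1 (Ordinal lt_k)) //= addKn big1 ?addr0 // => i.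
rewrite -val_eqE /= => i_neq; case: (ltnP (size P).-1 i) => [lt_i|le_i].
  by rewrite nth_default ?mul0r //; move: (nat_of_ord i) lt_i; case: (size P).
rewrite [Q`__]nth_default ?iter_shift_rf0 ?mulr0 //.
by move: (nat_of_ord i) i_neq le_i; case: (size Q) => [//|q] j /=; lia.
Qed.

Lemma opmul_neq0 P Q : P != 0 -> Q != 0 -> opmul P Q != 0.
Proof.
move=> P_neq0 Q_neq0.
have : (opmul P Q)`_((size P).-1 + (size Q).-1) != 0.
  by rewrite coef_opmul_lead mulf_neq0 ?iter_shift_rf_eq0 ?lead_coef_eq0.
by apply: contraNneq => ->; rewrite coef0.
Qed.

Lemma coef_exp_sep m P s t :
  (exp_sep m P s)`_t = if (t %% m == s)%N then P`_t else 0.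
Proof. by rewrite coef_poly; case: ltnP => // ?; rewrite nth_default ?if_same. Qed.

Lemma exp_sep_exp_sep m P s s' :
  exp_sep m (exp_sep m P s) s' = if s == s' then exp_sep m P s else 0.
Proof.
apply/polyP => t; rewrite coef_exp_sep (fun_if (fun R : recop K => R`_t)).
rewrite coef_exp_sep coef0.
case: (s =P s') => [<-|/eqP ne]; first by case: eqP.
by case: eqP => // ->; rewrite eq_sym (negbTE ne).
Qed.

Lemma exp_sep_opmul m P Q c : (0 < m)%N -> (c < m)%N ->
  exp_sep m (opmul P Q) c =
    \sum_(a < m) opmul (exp_sep m P a) (exp_sep m Q ((c + m - a) %% m)).
Proof.
move=> m_gt0 c_lt_m; apply/polyP => t.
rewrite coef_exp_sep coef_sum.
under eq_bigr => a _ do rewrite coef_opmul.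
rewrite exchange_big /=.
under eq_bigr => u _.
  rewrite (bigD1 (Ordinal (ltn_pmod u m_gt0))) //= big1 ?addr0 => [|a]; last first.
    by rewrite -val_eqE /= coef_exp_sep eq_sym => /negbTE->; rewrite mul0r.
  rewrite !coef_exp_sep eqxx (fun_if (iter u sh)) iter_shift_rf0.
  rewrite (eqn_modB_residue m_gt0 c_lt_m (ltnSE (ltn_ord u))) fun_if mulr0.
  over.
by rewrite coef_opmul; case: ifP => // _; rewrite big1.
Qed.

Lemma exists_homogeneous_left_multiple m s (L : recop K) : (s < m)%N ->
  exists2 Q : recop K, Q != 0 & exp_sep m (opmul Q L) s = opmul Q L.
Proof.
move=> s_lt_m.
(* a unknown coefficients of Q; Q L has fewer than n coefficients, of which the
   size L + 1 positions j m + s (j <= size L) are unconstrained. *)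
pose a := (m * (size L).+1)%N; pose n := (a + size L)%N.
pose S := [set k : 'I_n | (k %% m != s)%N].
have S_lt_a : (#|S| < a)%N.
  have a_gt0 : (0 < a)%N by rewrite muln_gt0 (leq_ltn_trans (leq0n s) s_lt_m).
  have cm_le_n : ((size L).+1 * m <= n)%N by rewrite mulnC leq_addr.
  by have := card_nonresidue s_lt_m cm_le_n; rewrite -/S; lia.
pose A : 'M[ratfun K]_(a, #|S|) := \matrix_(i < a, j < #|S|)
  (let k := nat_of_ord (enum_val j : 'I_n) in
   if (i <= k)%N then iter i sh L`_(k - i) else 0).
have [v v_neq0 vA0] := left_kernel_neq0 A S_lt_a.
exists (rVpoly v).
  by apply: contraNneq v_neq0 => v0; apply/eqP/(can_inj rVpolyK); rewrite v0 linear0.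
apply/polyP => t; rewrite coef_exp_sep; case: eqP => // /eqP t_nonres.
have [t_lt_n|t_ge_n] := ltnP t n; last first.
  rewrite nth_default // (leq_trans (size_poly _ _)) // (leq_trans (leq_pred _)) //.
  by rewrite (leq_trans _ t_ge_n) // leq_add2r size_poly.
have t_in_S : Ordinal t_lt_n \in S by rewrite inE.
have := congr1 (fun w : 'rV_#|S| => w 0 (enum_rank_in t_in_S (Ordinal t_lt_n))) vA0.
rewrite mxE [RHS]mxE (coef_opmul_widen L t (size_poly a _)) => vA0t.
rewrite -[LHS]vA0t; apply: eq_bigr => i _.
by rewrite coef_rVpoly_ord mxE enum_rankK_in.
Qed.

End RecurrenceOperators.

Theorem proposition4p3 (K : fieldType) (charK0 : [pchar K] =i pred0)
    (m : nat) (m_gt0 : (0 < m)%N) (L : recop K) (L_neq0 : L != 0) :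
  exists (M : 'M[recop K]_m) (T : 'I_m -> recop K),
    (forall i, T i != 0) /\ opmxmul M (sep_matrix m L) = opdiag T.
Proof.
have [Q Q_neq0 Q_homog] : exists2 Q : 'I_m -> recop K, forall i, Q i != 0 &
    forall i, exp_sep m (opmul (Q i) L) (rev_ord i) = opmul (Q i) L.
  exact: fin_all_exists2
    (fun i => exists_homogeneous_left_multiple L (ltn_ord (rev_ord i))).
pose M : 'M[recop K]_m := \matrix_(i, k) exp_sep m (Q i) (rev_ord k).
exists M, (fun i => opmul (Q i) L); split=> [i|]; first exact: opmul_neq0.
apply/matrixP => i j; rewrite !mxE.
have -> : \sum_(k < m) opmul (M i k) (sep_matrix m L k j)
    = exp_sep m (opmul (Q i) L) (rev_ord j).
  rewrite exp_sep_opmul // (reindex_inj rev_ord_inj); apply: eq_bigr => k _.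
  rewrite !mxE rev_ordK; congr (opmul _ (exp_sep _ _ (_ %% _)%N)).
  by rewrite /=; have := ltn_ord j; have := ltn_ord k; lia.
rewrite -[in LHS](Q_homog i) exp_sep_exp_sep Q_homog.
by rewrite val_eqE (inj_eq rev_ord_inj).
Qed.
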